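(* Let $\mathbf{x}=(x_s)\in(\mathbb{R}_{>0})^{\mathbb{Z}^3}$ satisfy the positive Kashaev recurrence: for every $v\in\mathbb{Z}^3$, writing $z_{ijk}=x_{v+(i,j,k)}$ for $i,j,k\in\{0,1\}$, $$z_{111}=\frac{A+2\sqrt{D}}{z_{000}^2},$$ where $A=2z_{100}z_{010}z_{001}+z_{000}(z_{100}z_{011}+z_{010}z_{101}+z_{001}z_{110})$, $D=(z_{000}z_{011}+z_{010}z_{001})(z_{000}z_{101}+z_{100}z_{001})(z_{000}z_{110}+z_{100}z_{010})$, and $\sqrt{D}$ is the positive square root. Then for every $v\in\mathbb{Z}^3$, $$\prod_{C\ni v}K^C_v(\mathbf{x})=\prod_{S\ni v}(x_vx_{v_2}+x_{v_1}x_{v_3}),$$ where the first product is over the $8$ unit cubes $C$ in $\mathbb{Z}^3$ containing $v$, and the second is over the $12$ unit squares $S$ containing $v$, with $v,v_1,v_2,v_3$ the vertices of $S$ in cyclic order.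
   Context: For a unit cube $C$ in $\mathbb{Z}^3$ with vertex $v$ and $\mathbf{x}\in\mathbb{C}^{\mathbb{Z}^3}$, label the values of $\mathbf{x}$ at the vertices of $C$ as $z_{ijk}$, $i,j,k\in\{0,1\}$, via an identification of $C$ with $\{0,1\}^3$ (a cube isomorphism) sending $v$ to $000$, and set $K^C_v(\mathbf{x})=\tfrac12\big(z_{111}z_{000}^2-z_{000}(z_{100}z_{011}+z_{010}z_{101}+z_{001}z_{110})\big)-z_{100}z_{010}z_{001}$ (independent of the choice of identification). *)

From HB Require Import structures.
From mathcomp Require Import all_boot all_order all_algebra.
From mathcomp Require Import reals.
Set Implicit Arguments. Unset Strict Implicit. Unset Printing Implicit Defensive.
Import Order.TTheory GRing.Theory Num.Theory.
Local Open Scope ring_scope.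

Definition Z3 := (int * int * int)%type.

Definition shift (v : Z3) (a b c : int) : Z3 :=
  (v.1.1 + a, v.1.2 + b, v.2 + c).

Definition sg (b : bool) : int := if b then -1 else 1.

Section Kashaev.
Variable R : realType.

Definition kashaev_at (x : Z3 -> R) (v : Z3) : Prop :=
  let z := fun i j k : int => x (shift v i j k) in
  let A := 2 * z 1 0 0 * z 0 1 0 * z 0 0 1
           + z 0 0 0 * (z 1 0 0 * z 0 1 1 + z 0 1 0 * z 1 0 1 + z 0 0 1 * z 1 1 0) in
  let D := (z 0 0 0 * z 0 1 1 + z 0 1 0 * z 0 0 1)
         * (z 0 0 0 * z 1 0 1 + z 1 0 0 * z 0 0 1)
         * (z 0 0 0 * z 1 1 0 + z 1 0 0 * z 0 1 0) in
  z 1 1 1 = (A + 2 * Num.sqrt D) / (z 0 0 0 ^+ 2).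

(* K^C_v for the unit cube C containing v that lies in the octant
   v + (s1 * [0,1]) x (s2 * [0,1]) x (s3 * [0,1]) with signs sg s1, sg s2, sg s3;
   the cube isomorphism C ~ {0,1}^3 sending v to 000 is
   (i,j,k) |-> v + (sg s1 * i, sg s2 * j, sg s3 * k). *)
Definition Kcube (x : Z3 -> R) (v : Z3) (s1 s2 s3 : bool) : R :=
  let z := fun i j k : int => x (shift v (sg s1 * i) (sg s2 * j) (sg s3 * k)) in
  2^-1 * (z 1 1 1 * z 0 0 0 ^+ 2
          - z 0 0 0 * (z 1 0 0 * z 0 1 1 + z 0 1 0 * z 1 0 1 + z 0 0 1 * z 1 1 0))
  - z 1 0 0 * z 0 1 0 * z 0 0 1.

(* For the unit square with vertices, in cyclic order,
   v, v1 = v + d1, v2 = v + d1 + d2, v3 = v + d2:  x_v x_v2 + x_v1 x_v3. *)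
Definition sqterm (x : Z3 -> R) (v : Z3) (d1 d2 : Z3) : R :=
  x v * x (shift v (d1.1.1 + d2.1.1) (d1.1.2 + d2.1.2) (d1.2 + d2.2))
  + x (shift v d1.1.1 d1.1.2 d1.2) * x (shift v d2.1.1 d2.1.2 d2.2).

Definition cube_prod (x : Z3 -> R) (v : Z3) : R :=
  \prod_(s1 : bool) \prod_(s2 : bool) \prod_(s3 : bool) Kcube x v s1 s2 s3.

(* Product over the 12 unit squares containing v
   (4 in each of the three coordinate planes through v). *)
Definition square_prod (x : Z3 -> R) (v : Z3) : R :=
  \prod_(s1 : bool) \prod_(s2 : bool)
     (sqterm x v (sg s1, 0, 0) (0, sg s2, 0)
    * sqterm x v (sg s1, 0, 0) (0, 0, sg s2)
    * sqterm x v (0, sg s1, 0) (0, 0, sg s2)).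

End Kashaev.

From HB Require Import structures.
From mathcomp Require Import all_boot all_order all_algebra.
From mathcomp Require Import reals.
From mathcomp Require Import ring lra.

(* For the values y at the corners of a unit cube and a corner v, put
   D_v = product of the three face terms x_v x_v2 + x_v1 x_v3 of the faces through v.
   Then K_v^2 - D_v = y_v^2 h / 4 for a quartic h in the eight values that does not
   depend on v (Cayley's hyperdeterminant up to the sign of one term).  The positive
   Kashaev recurrence at the bottom corner w of a cube says exactly K_w = sqrt D_w, so
   h = 0 and K_v = +- sqrt D_v at all eight corners.  For the signs, along every edge
   uv we have y_u K_v + y_v K_u = -(product of the two face terms through uv) < 0:
   this makes K negative at the three neighbours of w, and, once K > 0 is known at the
   top corner, at the three neighbours of the top corner.  So, seen from v, K^C_v is
   +sqrt D when v is the bottom or top corner of C and -sqrt D otherwise.  The eight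
   signs multiply to 1, and each of the twelve face terms at v occurs in exactly two of
   the eight D's, which gives the product over the squares. *)

Set Implicit Arguments.
Unset Strict Implicit.
Unset Printing Implicit Defensive.
Import Order.TTheory GRing.Theory Num.Theory.
Local Open Scope ring_scope.

Section UnitCube.
Variable R : rcfType.

Definition cube := bool -> bool -> bool -> R.
Implicit Types y : cube.

Definition recenter (a b c : bool) y : cube :=
  fun i j k => y (a (+) i) (b (+) j) (c (+) k).

(* In the definitions below, [z i j k] is the value of [y] at the corner (i, j, k). *)
Definition cubeK y : R :=
  let z i j k := y (odd i) (odd j) (odd k) in
  2^-1 * (z 1 1 1 * z 0 0 0 ^+ 2
          - z 0 0 0 * (z 1 0 0 * z 0 1 1 + z 0 1 0 * z 1 0 1 + z 0 0 1 * z 1 1 0))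
  - z 1 0 0 * z 0 1 0 * z 0 0 1.

Definition face12 y : R :=
  let z i j k := y (odd i) (odd j) (odd k) in z 0 0 0 * z 1 1 0 + z 1 0 0 * z 0 1 0.
Definition face13 y : R :=
  let z i j k := y (odd i) (odd j) (odd k) in z 0 0 0 * z 1 0 1 + z 1 0 0 * z 0 0 1.
Definition face23 y : R :=
  let z i j k := y (odd i) (odd j) (odd k) in z 0 0 0 * z 0 1 1 + z 0 1 0 * z 0 0 1.

Definition cubeD y : R := face23 y * face13 y * face12 y.

Definition kashaev_cube y : Prop :=
  let z i j k := y (odd i) (odd j) (odd k) in
  z 1 1 1 = (2 * z 1 0 0 * z 0 1 0 * z 0 0 1
             + z 0 0 0 * (z 1 0 0 * z 0 1 1 + z 0 1 0 * z 1 0 1 + z 0 0 1 * z 1 1 0)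
             + 2 * Num.sqrt (cubeD y)) / z 0 0 0 ^+ 2.

(* Cayley's 2x2x2 hyperdeterminant, with the sign of its last term flipped. *)
Definition hdet y : R :=
  let z i j k := y (odd i) (odd j) (odd k) in
  let d0 := z 0 0 0 * z 1 1 1 in let d1 := z 1 0 0 * z 0 1 1 in
  let d2 := z 0 1 0 * z 1 0 1 in let d3 := z 0 0 1 * z 1 1 0 in
  d0 ^+ 2 + d1 ^+ 2 + d2 ^+ 2 + d3 ^+ 2
  - 2 * (d0 * d1 + d0 * d2 + d0 * d3 + d1 * d2 + d1 * d3 + d2 * d3)
  - 4 * (z 0 0 0 * z 0 1 1 * z 1 0 1 * z 1 1 0 + z 1 1 1 * z 1 0 0 * z 0 1 0 * z 0 0 1).

Lemma cubeK_sqr y : cubeK y ^+ 2 = cubeD y + y false false false ^+ 2 * hdet y / 4.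
Proof. by rewrite /cubeK /cubeD /face12 /face13 /face23 /hdet /=; field. Qed.

Lemma hdet_recenter a b c y : hdet (recenter a b c y) = hdet y.
Proof. by case: a b c => [] [] []; rewrite /hdet /recenter /=; ring. Qed.

Lemma recenterA a b c a' b' c' y i j k :
  recenter a b c (recenter a' b' c' y) i j k
  = recenter (a' (+) a) (b' (+) b) (c' (+) c) y i j k.
Proof. by rewrite /recenter !addbA. Qed.

Lemma eq_cubeK {y y'} : (forall i j k, y i j k = y' i j k) -> cubeK y = cubeK y'.
Proof. by move=> e; rewrite /cubeK !e. Qed.

Lemma eq_cubeD {y y'} : (forall i j k, y i j k = y' i j k) -> cubeD y = cubeD y'.
Proof. by move=> e; rewrite /cubeD /face12 /face13 /face23 !e. Qed.

Lemma face_gt0 {y} : (forall i j k, 0 < y i j k) ->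
  [/\ 0 < face12 y, 0 < face13 y & 0 < face23 y].
Proof. by move=> ypos; split; apply: addr_gt0; apply: mulr_gt0. Qed.

Lemma cubeD_gt0 {y} : (forall i j k, 0 < y i j k) -> 0 < cubeD y.
Proof. by move=> /face_gt0[? ? ?]; rewrite /cubeD !mulr_gt0. Qed.

Lemma cubeD_gt_diag {y} : (forall i j k, 0 < y i j k) ->
  y false false false ^+ 3 * (y false true true * y true false true * y true true false)
  < cubeD y.
Proof.
move=> ypos; rewrite [X in X < _](_ : _ = y false false false * y false true true
    * (y false false false * y true false true) * (y false false false * y true true false)).
  by rewrite /cubeD /face12 /face13 /face23 !ltr_pM ?mulr_ge0 ?ltW ?ltrDl ?mulr_gt0.
by ring.
Qed.

Lemma cubeK_edge_lt0 {y} {a b c : bool} : (forall i j k, 0 < y i j k) ->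
  (a + b + c = 1)%N -> y false false false * cubeK (recenter a b c y) + y a b c * cubeK y < 0.
Proof.
move=> /face_gt0[f12 f13 f23]; rewrite -oppr_gt0.
case: a b c => [] [] [] //= _.
- rewrite [X in 0 < X](_ : _ = face12 y * face13 y) ?mulr_gt0 //.
  by rewrite /cubeK /face12 /face13 /recenter /=; field.
- rewrite [X in 0 < X](_ : _ = face12 y * face23 y) ?mulr_gt0 //.
  by rewrite /cubeK /face12 /face23 /recenter /=; field.
- rewrite [X in 0 < X](_ : _ = face13 y * face23 y) ?mulr_gt0 //.
  by rewrite /cubeK /face13 /face23 /recenter /=; field.
Qed.

Section PositiveKashaevCube.
Variable y : cube.
Hypothesis ypos : forall i j k, 0 < y i j k.
Hypothesis hk : kashaev_cube y.

Lemma cubeK_kashaev : cubeK y = Num.sqrt (cubeD y).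
Proof. by rewrite /cubeK /= hk; field; rewrite lt0r_neq0. Qed.

Lemma hdet_kashaev : hdet y = 0.
Proof.
have := cubeK_sqr y; rewrite cubeK_kashaev sqr_sqrtr ?ltW ?(cubeD_gt0 ypos) // => hD.
have /eqP : y false false false ^+ 2 * hdet y / 4 = 0 by lra.
rewrite mulf_eq0 invr_eq0 pnatr_eq0 orbF mulf_eq0 expf_eq0 /=.
by rewrite (negbTE (lt0r_neq0 (ypos _ _ _))) => /eqP.
Qed.

Lemma cubeK_recenter_sqr a b c : cubeK (recenter a b c y) ^+ 2 = cubeD (recenter a b c y).
Proof. by rewrite cubeK_sqr hdet_recenter hdet_kashaev mulr0 mul0r addr0. Qed.

Lemma cubeK_opposite_gt0 : 0 < cubeK (recenter true true true y).
Proof.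
have y0 := ypos false false false; have y7 := ypos true true true.
have s0 : 0 <= Num.sqrt (cubeD y) := sqrtr_ge0 _.
pose P := y true false false * y false true false * y false false true.
pose Q := y false true true * y true false true * y true true false.
have P0 : 0 <= P by rewrite !mulr_ge0 ?ltW.
have K7 : y false false false * cubeK (recenter true true true y)
          = y true true true * (P + Num.sqrt (cubeD y)) - y false false false * Q.
  by rewrite /cubeK /recenter /P /Q /= hk; field; rewrite lt0r_neq0.
have y7_ge : 2 * Num.sqrt (cubeD y) <= y false false false ^+ 2 * y true true true.
  rewrite hk [_ ^+ 2 * _]mulrC divfK ?expf_neq0 ?lt0r_neq0 // lerDr.
  by apply/ltW; rewrite /= !(addr_gt0, mulr_gt0, ltr0n).
have DQ := cubeD_gt_diag ypos; rewrite -(sqr_sqrtr (ltW (cubeD_gt0 ypos))) -/Q in DQ.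
(* y000^3 Q < s^2 <= y000^2 y111 s / 2 <= y000^2 y111 (P + s), with s = sqrt D *)
have : y false false false ^+ 2 * (y false false false * Q)
       < y false false false ^+ 2 * (y true true true * (P + Num.sqrt (cubeD y))).
  by have := ler_wpM2r s0 y7_ge; nra.
by rewrite ltr_pM2l ?exprn_gt0 // -subr_gt0 -K7 pmulr_rgt0.
Qed.

Lemma cubeK_near_base_lt0 (a b c : bool) :
  (a + b + c = 1)%N -> cubeK (recenter a b c y) < 0.
Proof.
move=> /(cubeK_edge_lt0 ypos); rewrite [cubeK y]cubeK_kashaev.
have := sqrtr_ge0 (cubeD y); have := ypos a b c; have := ypos false false false.
move=> *; nra.
Qed.

Lemma cubeK_near_opposite_lt0 (a b c : bool) :
  (a + b + c = 2)%N -> cubeK (recenter a b c y) < 0.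
Proof.
move=> abc; have ypos' i j k : 0 < recenter true true true y i j k := ypos _ _ _.
have /(cubeK_edge_lt0 ypos') : (~~ a + ~~ b + ~~ c = 1)%N.
  by move: abc; case: a b c => [] [] [].
rewrite (eq_cubeK (recenterA _ _ _ _ _ _ _)) !addTb !negbK.
have := cubeK_opposite_gt0; have := ypos' (~~ a) (~~ b) (~~ c).
have := ypos true true true; rewrite /recenter /= => *; nra.
Qed.

Lemma cubeK_recenter_sign a b c :
  if (a == b) && (b == c) then 0 <= cubeK (recenter a b c y)
  else cubeK (recenter a b c y) <= 0.
Proof.
case: a b c => [] [] [] /=.
- exact/ltW/cubeK_opposite_gt0.
- exact/ltW/cubeK_near_opposite_lt0.
- exact/ltW/cubeK_near_opposite_lt0.
- exact/ltW/cubeK_near_base_lt0.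
- exact/ltW/cubeK_near_opposite_lt0.
- exact/ltW/cubeK_near_base_lt0.
- exact/ltW/cubeK_near_base_lt0.
- by rewrite [cubeK _]cubeK_kashaev sqrtr_ge0.
Qed.

Lemma cubeK_recenter_kashaev a b c :
  cubeK (recenter a b c y)
  = (if (a == b) && (b == c) then 1 else -1) * Num.sqrt (cubeD (recenter a b c y)).
Proof.
rewrite -cubeK_recenter_sqr sqrtr_sqr; have := cubeK_recenter_sign a b c.
by case: ifP => _ sgn; [rewrite mul1r ger0_norm | rewrite mulN1r ler0_norm ?opprK].
Qed.

End PositiveKashaevCube.

End UnitCube.

Lemma prod_signed_sqrt (R : rcfType) (F G H : bool -> bool -> R) :
  (forall a b, 0 <= F a b) -> (forall a b, 0 <= G a b) -> (forall a b, 0 <= H a b) ->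
  \prod_(s1 : bool) \prod_(s2 : bool) \prod_(s3 : bool)
     ((if (s1 == s2) && (s2 == s3) then 1 else -1) * Num.sqrt (F s1 s2 * G s1 s3 * H s2 s3))
  = \prod_(s1 : bool) \prod_(s2 : bool) (F s1 s2 * G s1 s2 * H s1 s2).
Proof.
move=> F0 G0 H0.
have sqrtM a b c : Num.sqrt (F a b * G a c * H b c)
                   = Num.sqrt (F a b) * Num.sqrt (G a c) * Num.sqrt (H b c).
  by rewrite !sqrtrM ?mulr_ge0.
transitivity (\prod_(s1 : bool) \prod_(s2 : bool)
  (Num.sqrt (F s1 s2) ^+ 2 * Num.sqrt (G s1 s2) ^+ 2 * Num.sqrt (H s1 s2) ^+ 2)).
  by rewrite !big_bool /= !sqrtM; ring.
by apply: eq_bigr => a _; apply: eq_bigr => b _; rewrite !sqr_sqrtr.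
Qed.

Lemma shift0 (v : Z3) : shift v 0 0 0 = v.
Proof. by case: v => [[a b] c]; rewrite /shift /= !addr0. Qed.

Lemma shift_shift (v : Z3) a b c a' b' c' :
  shift (shift v a b c) a' b' c' = shift v (a + a') (b + b') (c + c').
Proof. by rewrite /shift /= !addrA. Qed.

Lemma sg_mulE (s i : bool) : sg s * i = - (s : int) + (s (+) i : int).
Proof. by case: s i => [] []. Qed.

Section Lattice.
Variables (R : realType) (x : Z3 -> R).

Definition lattice_cube (w : Z3) : cube R := fun i j k => x (shift w i j k).

Definition octant_cube (v : Z3) (s1 s2 s3 : bool) : cube R :=
  fun i j k => x (shift v (sg s1 * i) (sg s2 * j) (sg s3 * k)).

Lemma Kcube_octant v s1 s2 s3 : Kcube x v s1 s2 s3 = cubeK (octant_cube v s1 s2 s3).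
Proof. by []. Qed.

Lemma octant_cube_recenter v s1 s2 s3 i j k :
  octant_cube v s1 s2 s3 i j k
  = recenter s1 s2 s3 (lattice_cube (shift v (- (s1 : int)) (- (s2 : int)) (- (s3 : int))))
      i j k.
Proof. by rewrite /octant_cube /recenter /lattice_cube shift_shift !sg_mulE. Qed.

Lemma cubeD_octant v s1 s2 s3 :
  cubeD (octant_cube v s1 s2 s3)
  = sqterm x v (sg s1, 0, 0) (0, sg s2, 0) * sqterm x v (sg s1, 0, 0) (0, 0, sg s3)
    * sqterm x v (0, sg s2, 0) (0, 0, sg s3).
Proof.
rewrite /cubeD /face12 /face13 /face23 /sqterm /octant_cube /=.
by rewrite !mulr0 !mulr1 !addr0 !add0r shift0; ring.
Qed.

Lemma sqterm_ge0 (hpos : forall s, 0 < x s) v d1 d2 : 0 <= sqterm x v d1 d2.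
Proof. by rewrite /sqterm addr_ge0 ?mulr_ge0 ?ltW. Qed.

Lemma Kcube_kashaev (hpos : forall s, 0 < x s) (hrec : forall w, kashaev_at x w)
    v s1 s2 s3 :
  Kcube x v s1 s2 s3
  = (if (s1 == s2) && (s2 == s3) then 1 else -1)
    * Num.sqrt (sqterm x v (sg s1, 0, 0) (0, sg s2, 0) * sqterm x v (sg s1, 0, 0) (0, 0, sg s3)
                * sqterm x v (0, sg s2, 0) (0, 0, sg s3)).
Proof.
rewrite Kcube_octant -cubeD_octant (eq_cubeK (octant_cube_recenter _ _ _ _)).
rewrite (eq_cubeD (octant_cube_recenter _ _ _ _)).
by apply: cubeK_recenter_kashaev => [i j k|]; [exact: hpos | exact: hrec].
Qed.

End Lattice.

Theorem theorem2p9 (R : realType) (x : Z3 -> R)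
  (hpos : forall s : Z3, 0 < x s)
  (hrec : forall v : Z3, kashaev_at x v) :
  forall v : Z3, cube_prod x v = square_prod x v.
Proof.
move=> v; rewrite /cube_prod.
under eq_bigr => s1 _ do under eq_bigr => s2 _ do under eq_bigr => s3 _ do
  rewrite (Kcube_kashaev hpos hrec).
apply: (prod_signed_sqrt (F := fun a b => sqterm x v (sg a, 0, 0) (0, sg b, 0))
                         (G := fun a b => sqterm x v (sg a, 0, 0) (0, 0, sg b))
                         (H := fun a b => sqterm x v (0, sg a, 0) (0, 0, sg b)))
  => *; exact: sqterm_ge0.
Qed.
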